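(* Let $A$ be a symmetric adornment with base $[x,y]$. Then $A$ is slender if and only if $A$ is a union of sets of the form $B(x,r)\cap B(y,s)$ (for some family of radius pairs $(r,s)$), where $B(c,\rho)$ denotes the closed disk of radius $\rho$ centered at $c$.
   Context: An adornment is a compact simply connected region $S\subset\mathbb{R}^2$ together with a segment $[x,y]$, $x\neq y$, whose endpoints lie on the boundary of $S$ and with $[x,y]\subseteq S$ (the base). The boundary of $S$ consists of two arcs from $x$ to $y$ (the sides). The adornment is slender if, for a point $p$ moving along either side from $x$ to $y$, $\|p-x\|$ is nondecreasing and $\|p-y\|$ is nonincreasing. It is symmetric if invariant under reflection in the line through $x,y$. *)

From HB Require Import structures.
From mathcomp Require Import all_boot all_order all_algebra.
From mathcomp Require Import all_classical all_reals topology normedtype.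
Set Implicit Arguments. Unset Strict Implicit. Unset Printing Implicit Defensive.
Import Order.TTheory GRing.Theory Num.Theory.
Import numFieldNormedType.Exports.
Local Open Scope classical_set_scope.
Local Open Scope ring_scope.

Section Plane.
Variable R : realType.
Notation pt := (R * R)%type.

Definition edist (p q : pt) : R :=
  Num.sqrt ((p.1 - q.1) ^+ 2 + (p.2 - q.2) ^+ 2).

Definition cdisk (c : pt) (rho : R) : set pt := [set p | edist p c <= rho].

Definition segment (x y : pt) : set pt :=
  [set p | exists2 t : R, 0 <= t <= 1 &
     p = (x.1 + t * (y.1 - x.1), x.2 + t * (y.2 - x.2))].

Definition bdry (S : set pt) : set pt := closure S `\` interior S.

Definition I01 : set R := [set t | 0 <= t <= 1].

Definition is_arc (g : R -> pt) (a b : pt) : Prop :=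
  {within I01, continuous g} /\
  (forall s t, I01 s -> I01 t -> g s = g t -> s = t) /\
  g 0 = a /\ g 1 = b.

Definition simply_connected (S : set pt) : Prop :=
  (forall a b, S a -> S b -> exists g : R -> pt,
      [/\ {within I01, continuous g}, g @` I01 `<=` S, g 0 = a & g 1 = b]) /\
  (forall g : R -> pt, {within I01, continuous g} -> g @` I01 `<=` S ->
     g 0 = g 1 ->
     exists H : pt -> pt,
       [/\ {within I01 `*` I01, continuous H},
           H @` (I01 `*` I01) `<=` S,
           (forall t, I01 t -> H (t, 0) = g t),
           (forall t, I01 t -> H (t, 1) = g 0) &
           (forall s, I01 s -> H (0, s) = g 0 /\ H (1, s) = g 0)]).

Definition adornment (S : set pt) (x y : pt) : Prop :=
  [/\ compact S /\ simply_connected S, x <> y,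
      bdry S x /\ bdry S y, segment x y `<=` S &
      exists g1 g2 : R -> pt,
        [/\ is_arc g1 x y, is_arc g2 x y,
            bdry S = g1 @` I01 `|` g2 @` I01 &
            g1 @` I01 `&` g2 @` I01 = [set x; y]]].

(** Slender: along each side (any arc from x to y contained in the
    boundary), the distance to x is nondecreasing and the distance to y
    is nonincreasing. *)
Definition slender (S : set pt) (x y : pt) : Prop :=
  forall g : R -> pt, is_arc g x y -> g @` I01 `<=` bdry S ->
    forall s t, 0 <= s -> s <= t -> t <= 1 ->
      edist (g s) x <= edist (g t) x /\ edist (g t) y <= edist (g s) y.

Definition reflect_line (x y : pt) (p : pt) : pt :=
  let d1 := y.1 - x.1 in let d2 := y.2 - x.2 in
  let u := ((p.1 - x.1) * d1 + (p.2 - x.2) * d2) / (d1 ^+ 2 + d2 ^+ 2) in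
  (2 * (x.1 + u * d1) - p.1, 2 * (x.2 + u * d2) - p.2).

Definition symmetric_adornment (S : set pt) (x y : pt) : Prop :=
  adornment S x y /\ reflect_line x y @` S = S.

End Plane.

From Pilot Require Import Defs.
From HB Require Import structures.
From mathcomp Require Import all_boot all_order all_algebra.
From mathcomp Require Import all_classical all_reals topology normedtype.
From mathcomp Require Import ring lra.
Import Order.TTheory GRing.Theory Num.Theory.
Import numFieldNormedType.Exports.
Local Open Scope classical_set_scope.
Local Open Scope ring_scope.
Set Implicit Arguments. Unset Strict Implicit.

(* Write [dx], [dy] for the distances to [x] and [y], and call two boundary
   points ordered when one has the larger [dx] and the smaller [dy].

   If [S] is symmetric, the reflection in the line [xy] maps one side onto the
   other: a side mapped into itself is fixed pointwise by the reflection, and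
   two fixed sides would both pass through the midpoint of [[x, y]]. So every
   boundary point has a twin on a single side with the same [(dx, dy)], and
   slenderness of that side makes all boundary points pairwise ordered.
   Ordered boundaries characterise unions of lenses [B(x, r) ∩ B(y, s)]:
   - if [p ∈ S] and [q ∉ S] had [dx q <= dx p] and [dy q <= dy p], walking
     from [p] away from the line [xy] meets the boundary at a point dominating
     [p], while walking from [q] to the line and then along it towards
     [[x, y] ⊆ S] meets it at a point strictly dominated by [q];
   - conversely, in a union of lenses a boundary point is never strictly
     dominated by a point of [S], since the strictly dominated points form an
     open subset of [S]; and along an arc in an ordered boundary [dx² - dy²]
     is monotone, for otherwise the IVT yields three boundary points with the
     same [(dx, dy)], while these determine a point up to reflection. *)

Section SquaredDistance.
Variable R : realType.
Notation pt := (R * R)%type.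
Implicit Types p q : pt.

Definition sqdist p q : R := (p.1 - q.1) ^+ 2 + (p.2 - q.2) ^+ 2.

Definition midpoint p q : pt := ((p.1 + q.1) / 2, (p.2 + q.2) / 2).

Lemma sqdist_ge0 p q : 0 <= sqdist p q.
Proof. by rewrite /sqdist addr_ge0 // sqr_ge0. Qed.

Lemma le_edist p q p' q' :
  (Defs.edist p q <= Defs.edist p' q') = (sqdist p q <= sqdist p' q').
Proof. by rewrite /Defs.edist ler_sqrt // sqdist_ge0. Qed.

Lemma sqdist_eq0 p q : sqdist p q = 0 -> p = q.
Proof.
case: p q => [p1 p2] [q1 q2]; rewrite /sqdist /= => /eqP.
by rewrite paddr_eq0 ?sqr_ge0 // !sqrf_eq0 !subr_eq0 => /andP[/eqP -> /eqP ->].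
Qed.

Lemma sqdistxx p : sqdist p p = 0.
Proof. by rewrite /sqdist !subrr expr0n /= addr0. Qed.

Lemma midpoint_neql p q : p <> q -> midpoint p q <> p.
Proof. by case: p q => [p1 p2] [q1 q2] pq [e1 e2]; apply: pq; congr pair; lra. Qed.

Lemma midpoint_neqr p q : p <> q -> midpoint p q <> q.
Proof. by case: p q => [p1 p2] [q1 q2] pq [e1 e2]; apply: pq; congr pair; lra. Qed.

End SquaredDistance.

Section Reflection.
Variable R : realType.
Notation pt := (R * R)%type.
Variables x y : pt.
Hypothesis xy : x <> y.
Notation sigma := (reflect_line x y).

Definition base_coord (p : pt) : R :=
  (p.1 - x.1) * (y.1 - x.1) + (p.2 - x.2) * (y.2 - x.2).

Lemma sqdist_base_neq0 : sqdist y x != 0.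
Proof. by apply/eqP => /sqdist_eq0 yx; apply: xy. Qed.

Lemma sqdist_base_gt0 : 0 < sqdist y x.
Proof. by rewrite lt_neqAle eq_sym sqdist_base_neq0 sqdist_ge0. Qed.

Lemma reflect_lineK : involutive sigma.
Proof.
move=> p; move: sqdist_base_neq0.
case: x y p => [x1 x2] [y1 y2] [p1 p2]; rewrite /reflect_line /sqdist /= => hD.
by congr pair; field.
Qed.

Lemma reflect_line_x : sigma x = x.
Proof.
move: sqdist_base_neq0.
case: x y => [x1 x2] [y1 y2]; rewrite /reflect_line /sqdist /= => hD.
by congr pair; field.
Qed.

Lemma reflect_line_y : sigma y = y.
Proof.
move: sqdist_base_neq0.
case: x y => [x1 x2] [y1 y2]; rewrite /reflect_line /sqdist /= => hD.
by congr pair; field.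
Qed.

Lemma sqdist_reflect_line_x p : sqdist (sigma p) x = sqdist p x.
Proof.
move: sqdist_base_neq0.
case: x y p => [x1 x2] [y1 y2] [p1 p2]; rewrite /reflect_line /sqdist /= => hD.
by field.
Qed.

Lemma sqdist_reflect_line_y p : sqdist (sigma p) y = sqdist p y.
Proof.
move: sqdist_base_neq0.
case: x y p => [x1 x2] [y1 y2] [p1 p2]; rewrite /reflect_line /sqdist /= => hD.
by field.
Qed.

Lemma reflect_line_fixed_midpoint z : sigma z = z ->
  base_coord z = sqdist y x / 2 -> z = midpoint x y.
Proof.
rewrite /base_coord /midpoint; move: sqdist_base_neq0.
case: x y z => [x1 x2] [y1 y2] [z1 z2].
rewrite /reflect_line /sqdist /= => hD [e1 e2] hz.
rewrite hz in e1 e2.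
have half : ((y1 - x1) ^+ 2 + (y2 - x2) ^+ 2) / 2
            / ((y1 - x1) ^+ 2 + (y2 - x2) ^+ 2) = 1 / 2 by field.
by rewrite half in e1 e2; congr pair; lra.
Qed.

Lemma orthogonal2_parallel (K : idomainType) (a1 a2 d1 d2 z1 z2 : K) :
  a1 * d1 + a2 * d2 = 0 -> a1 * z1 + a2 * z2 = 0 -> (a1 != 0) || (a2 != 0) ->
  d1 * z2 - d2 * z1 = 0.
Proof.
move=> ad az /orP[a0|a0]; apply/eqP.
  have : (d1 * z2 - d2 * z1) * a1 = z2 * (a1 * d1 + a2 * d2) - d2 * (a1 * z1 + a2 * z2).
    by ring.
  by rewrite ad az !mulr0 subrr => /eqP; rewrite mulf_eq0 (negbTE a0) orbF.
have : (d1 * z2 - d2 * z1) * a2 = d1 * (a1 * z1 + a2 * z2) - z1 * (a1 * d1 + a2 * d2).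
  by ring.
by rewrite ad az !mulr0 subrr => /eqP; rewrite mulf_eq0 (negbTE a0) orbF.
Qed.

Lemma parallel_proj (K : fieldType) (d1 d2 z1 z2 : K) :
  d1 ^+ 2 + d2 ^+ 2 != 0 -> d1 * z2 - d2 * z1 = 0 ->
  z1 = (d1 * z1 + d2 * z2) / (d1 ^+ 2 + d2 ^+ 2) * d1 /\
  z2 = (d1 * z1 + d2 * z2) / (d1 ^+ 2 + d2 ^+ 2) * d2.
Proof.
move=> D0 dz; split; apply: (mulIf D0); rewrite mulrAC mulfVK //; apply/eqP;
  rewrite -subr_eq0; apply/eqP.
  have -> : z1 * (d1 ^+ 2 + d2 ^+ 2) - (d1 * z1 + d2 * z2) * d1 = - d2 * (d1 * z2 - d2 * z1).
    by ring.
  by rewrite dz mulr0.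
have -> : z2 * (d1 ^+ 2 + d2 ^+ 2) - (d1 * z1 + d2 * z2) * d2 = d1 * (d1 * z2 - d2 * z1).
  by ring.
by rewrite dz mulr0.
Qed.

(* Equal distances to [x] and [y] make [q - p] orthogonal both to the base and
   to [q + p - 2x]; so either [q = p], or [q + p - 2x] is parallel to the base,
   i.e. [q] is the mirror image of [p]. *)
Lemma sqdist2_eq_reflect p q : sqdist q x = sqdist p x -> sqdist q y = sqdist p y ->
  q = p \/ q = sigma p.
Proof.
move: sqdist_base_neq0.
case: x y p q => [x1 x2] [y1 y2] [p1 p2] [q1 q2].
rewrite /reflect_line /sqdist /= => hD hx hy.
have ad : (q1 - p1) * (y1 - x1) + (q2 - p2) * (y2 - x2) = 0.
  have e : ((q1 - p1) * (y1 - x1) + (q2 - p2) * (y2 - x2)) * 2 =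
      ((q1 - x1) ^+ 2 + (q2 - x2) ^+ 2 - ((p1 - x1) ^+ 2 + (p2 - x2) ^+ 2))
      - ((q1 - y1) ^+ 2 + (q2 - y2) ^+ 2 - ((p1 - y1) ^+ 2 + (p2 - y2) ^+ 2)) by ring.
  by move: e; rewrite hx hy !subrr => /eqP; rewrite mulf_eq0 pnatr_eq0 orbF => /eqP.
have az : (q1 - p1) * (q1 + p1 - 2 * x1) + (q2 - p2) * (q2 + p2 - 2 * x2) = 0.
  have -> : (q1 - p1) * (q1 + p1 - 2 * x1) + (q2 - p2) * (q2 + p2 - 2 * x2) =
      (q1 - x1) ^+ 2 + (q2 - x2) ^+ 2 - ((p1 - x1) ^+ 2 + (p2 - x2) ^+ 2) by ring.
  by rewrite hx subrr.
have [/andP[/eqP a1 /eqP a2]|a0] := boolP ((q1 - p1 == 0) && (q2 - p2 == 0)).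
  by left; congr pair; apply/eqP; rewrite -subr_eq0; apply/eqP.
right; rewrite negb_and in a0.
have [k1 k2] := parallel_proj hD (orthogonal2_parallel ad az a0).
set u := (p1 - x1) * (y1 - x1) + (p2 - x2) * (y2 - x2).
have dz : (y1 - x1) * (q1 + p1 - 2 * x1) + (y2 - x2) * (q2 + p2 - 2 * x2) = 2 * u.
  by rewrite -[RHS]addr0 -ad /u; ring.
by rewrite dz in k1 k2; congr pair; lra.
Qed.

Lemma sqdist2_at_most_two p q r : sqdist q x = sqdist p x -> sqdist q y = sqdist p y ->
  sqdist r x = sqdist p x -> sqdist r y = sqdist p y -> q <> p -> r <> p -> q = r.
Proof.
move=> qx qy rx ry qp rp.
have [//|->] := sqdist2_eq_reflect qx qy.
by have [//|->] := sqdist2_eq_reflect rx ry.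
Qed.

End Reflection.

Section Continuity.
Variable R : realType.
Notation pt := (R * R)%type.

Lemma continuous_pair (T : topologicalType) (f g : T -> R) :
  continuous f -> continuous g -> continuous (fun t => (f t, g t)).
Proof.
move=> cf cg t.
by apply: (@cvg_pair _ _ _ _ (nbhs (f t)) (nbhs (g t))); [exact: cf|exact: cg].
Qed.

Lemma continuous_fst_pt : continuous (fun p : pt => p.1).
Proof. by move=> p; exact: cvg_fst. Qed.

Lemma continuous_snd_pt : continuous (fun p : pt => p.2).
Proof. by move=> p; exact: cvg_snd. Qed.

Ltac polynomial_cvg := rewrite ?expr2; repeat first
  [ exact: cvg_cst | exact: cvg_id | exact: continuous_fst_pt
  | exact: continuous_snd_pt | apply: cvgB | apply: cvgD | apply: cvgM | apply: cvgN ].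

Definition line_through (p v : pt) (t : R) : pt := (p.1 + t * v.1, p.2 + t * v.2).

Lemma line_through_continuous p v : continuous (line_through p v).
Proof. by apply: continuous_pair => t; polynomial_cvg. Qed.

Lemma sqdist_continuous (c : pt) : continuous (fun p : pt => sqdist p c).
Proof. by move=> p; rewrite /sqdist; polynomial_cvg. Qed.

Lemma base_coord_continuous (x y : pt) : continuous (base_coord x y).
Proof. by move=> p; rewrite /base_coord; polynomial_cvg. Qed.

Lemma reflect_line_continuous (x y : pt) : continuous (reflect_line x y).
Proof. by rewrite /reflect_line; apply: continuous_pair => p; polynomial_cvg. Qed.

End Continuity.

Lemma connected_sub_closedU (T : topologicalType) (C P Q : set T) :
  connected C -> closed P -> closed Q -> C `<=` P `|` Q ->
  (forall z, C z -> P z -> Q z -> False) -> C `<=` P \/ C `<=` Q.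
Proof.
move=> cC cP cQ CPQ PQ.
have sep : separated (C `&` P) (C `&` Q).
  split; apply/seteqP; split=> // z [].
  - move=> /(closureS (@subIsetr _ C P)); rewrite -(closure_id P).1 // => Pz [Cz Qz].
    exact: PQ Cz Pz Qz.
  - move=> [Cz Pz] /(closureS (@subIsetr _ C Q)); rewrite -(closure_id Q).1 // => Qz.
    exact: PQ Cz Pz Qz.
have CPQ' : C `<=` (C `&` P) `|` (C `&` Q).
  by move=> z Cz; case: (CPQ _ Cz) => ?; [left|right].
by case: (connected_subset sep CPQ' cC) => CA; [left|right] => z /CA[].
Qed.

Lemma compact_closed_pt (R : realType) (S : set (R * R)) : compact S -> closed S.
Proof. exact: compact_closed (@norm_hausdorff _ _). Qed.

Lemma I01_0 {R : realType} : @I01 R 0. Proof. by rewrite /I01 /= lexx ler01. Qed.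
Lemma I01_1 {R : realType} : @I01 R 1. Proof. by rewrite /I01 /= lexx ler01. Qed.

Section Arcs.
Variable R : realType.
Notation pt := (R * R)%type.
Notation I := (@I01 R).
Implicit Types (g : R -> pt) (a b c s t : R).

Definition inj01 g := forall s t, I s -> I t -> g s = g t -> s = t.

Lemma I01_itv : I = `[0, 1]%classic.
Proof. by rewrite set_itvcc. Qed.

Lemma itvccP a b t : `[a, b]%classic t <-> a <= t <= b.
Proof. by rewrite /= in_itv. Qed.

Lemma I01_between a b s : I a -> I b -> a <= s <= b -> I s.
Proof.
rewrite /I01 /= => /andP[a0 _] /andP[_ b1] /andP[h1 h2].
by rewrite (le_trans a0 h1) (le_trans h2 b1).
Qed.

Lemma continuous_within_subitv g a b : {within I, continuous g} -> 0 <= a -> b <= 1 ->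
  {within `[a, b]%classic, continuous g}.
Proof.
move=> cg a0 b1; apply: continuous_subspaceW cg => t /itvccP /andP[h1 h2].
by rewrite /I01 /= (le_trans a0 h1) (le_trans h2 b1).
Qed.

Lemma closed_image_subitv g a b : {within I, continuous g} -> 0 <= a -> b <= 1 ->
  closed (g @` `[a, b]%classic).
Proof.
move=> cg a0 b1; apply: compact_closed_pt; apply: continuous_compact.
  exact: continuous_within_subitv.
exact: segment_compact.
Qed.

Lemma connected_arc_between g (C : set pt) a b c :
  {within I, continuous g} -> inj01 g -> connected C -> C `<=` g @` I ->
  I a -> I b -> a <= c <= b -> C (g a) -> C (g b) -> C (g c).
Proof.
move=> cg ig cC Cg Ia Ib acb Cga Cgb.
have Ic := I01_between Ia Ib acb; have /andP[c0 c1] := Ic; have /andP[ac cb] := acb.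
apply: contrapT => nCgc.
(* without [g c], [C] would be split by the closed pieces [g [0, c]] and [g [c, 1]] *)
have cover : C `<=` g @` `[0, c]%classic `|` g @` `[c, 1]%classic.
  move=> _ /Cg [t It <-]; have /andP[t0 t1] := It.
  have [tc|ct] := lerP t c; [left|right]; exists t => //; apply/itvccP.
    by rewrite t0 tc.
  by rewrite t1 ltW.
have meet z : C z -> (g @` `[0, c]%classic) z -> (g @` `[c, 1]%classic) z -> False.
  move=> Cz [t1 /itvccP ht1 e1] [t2 /itvccP ht2 e2].
  have It1 := I01_between I01_0 Ic ht1; have It2 := I01_between Ic I01_1 ht2.
  have t12 : t1 = t2 by apply: ig It1 It2 _; rewrite e1 e2.
  have t1c : t1 = c.
    by case/andP: ht1 => _ t1c; case/andP: ht2 => ct2 _; apply/eqP; rewrite eq_le t1c t12 ct2.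
  by apply: nCgc; rewrite -t1c e1.
have [CL|CR] := connected_sub_closedU cC (closed_image_subitv cg (lexx 0) c1)
  (closed_image_subitv cg c0 (lexx 1)) cover meet.
- have [t /itvccP tc gtb] := CL _ Cgb.
  have tb : t = b := ig _ _ (I01_between I01_0 Ic tc) Ib gtb.
  have bc : b = c by case/andP: tc => _ tc; apply/eqP; rewrite eq_le cb -tb tc.
  by apply: nCgc; rewrite -bc.
- have [t /itvccP ct gta] := CR _ Cga.
  have ta : t = a := ig _ _ (I01_between Ic I01_1 ct) Ia gta.
  have ac' : a = c by case/andP: ct => ct _; apply/eqP; rewrite eq_le ac -ta ct.
  by apply: nCgc; rewrite -ac'.
Qed.

(* If [sg (g t) = g u] with [t < u], the connected set [sg (g [0, t])] contains
   [g [0, u]]; applying [sg] once more, some [g s] with [t < s] equals some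
   [g r] with [r <= t], contradicting injectivity. *)
Lemma arc_involution_fixed g (sg : pt -> pt) :
  {within I, continuous g} -> inj01 g -> continuous sg -> involutive sg ->
  sg (g 0) = g 0 -> (forall t, I t -> (g @` I) (sg (g t))) ->
  forall t, I t -> sg (g t) = g t.
Proof.
move=> cg ig csg sgK sg0 stable.
have cover t u s : I t -> I u -> g u = sg (g t) -> 0 <= s <= u ->
    exists2 r, 0 <= r <= t & g s = sg (g r).
  move=> It Iu gu su; have /andP[t0 t1] := It.
  have : ((sg \o g) @` `[0, t]%classic) (g s).
    apply: (connected_arc_between cg ig _ _ I01_0 Iu su).
    - apply: connected_continuous_connected; first exact: segment_connected.
      apply: within_continuous_comp; last exact: continuous_within_subitv.
      by move=> z _; exact: csg.
    - by move=> _ [r /itvccP rt <-]; exact: stable (I01_between I01_0 It rt).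
    - by exists 0; [apply/itvccP; rewrite lexx t0 | rewrite /= sg0].
    - by exists t; [apply/itvccP; rewrite t0 lexx | rewrite /= gu].
  by case=> r /itvccP rt <-; exists r.
have le_partner t u : I t -> I u -> g u = sg (g t) -> u <= t.
  move=> It Iu gu; rewrite leNgt; apply/negP => tu.
  pose s := (t + u) / 2.
  have su : 0 <= s <= u by have /andP[t0 _] := It; rewrite /s; apply/andP; split; lra.
  have [r rt gs] := cover t u s It Iu gu su.
  have ru : 0 <= r <= u by case/andP: rt => r0 rt; rewrite r0 (le_trans rt (ltW tu)).
  have [r' r't gr] := cover t u r It Iu gu ru.
  have r's : r' = s.
    apply: ig; [exact: I01_between I01_0 It r't | exact: I01_between I01_0 Iu su |].
    by rewrite gs gr sgK.
  by move: r't; rewrite r's /s => /andP[_]; lra.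
move=> t It; have [u Iu gu] := stable t It.
have ut := le_partner t u It Iu gu.
have tu : t <= u by apply: le_partner Iu It _; rewrite gu sgK.
by rewrite -gu; congr g; apply/eqP; rewrite eq_le ut tu.
Qed.

Lemma arc_sub_closedU g (P Q : set pt) :
  {within I, continuous g} -> inj01 g -> closed P -> closed Q ->
  (forall t, I t -> P (g t) \/ Q (g t)) ->
  (forall z, P z -> Q z -> z = g 0 \/ z = g 1) ->
  P (g 0) -> P (g 1) -> Q (g 0) -> Q (g 1) ->
  (forall t, I t -> P (g t)) \/ (forall t, I t -> Q (g t)).
Proof.
move=> cg ig cP cQ cover meet P0 P1 Q0 Q1.
pose C := g @` `]0, 1[%classic.
have I_oo t : `]0, 1[%classic t -> I t.
  by rewrite /= in_itv /= => /andP[t0 t1]; rewrite /I01 /= !ltW.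
have cC : connected C.
  apply: connected_continuous_connected.
    by apply/connected_intervalP; exact: interval_is_interval.
  exact: continuous_subspaceW I_oo cg.
have to_ends (A : set pt) : A (g 0) -> A (g 1) -> C `<=` A -> forall t, I t -> A (g t).
  move=> A0 A1 CA t It; have /andP[t0 t1] := It.
  have [->//|tn0] := eqVneq t 0; have [->//|tn1] := eqVneq t 1.
  by apply: CA; exists t => //=; rewrite in_itv /= !lt_neqAle tn1 t1 eq_sym tn0 t0.
have coverC : C `<=` P `|` Q by move=> _ [t /I_oo It <-]; exact: cover.
have meetC z : C z -> P z -> Q z -> False.
  move=> [t t01 <-] Pt Qt; have It := I_oo _ t01.
  move: t01; rewrite /= in_itv /= => /andP[t0 t1].
  have [e|e] := meet _ Pt Qt.
  + by move: t0; rewrite (ig _ _ It I01_0 e) ltxx.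
  + by move: t1; rewrite (ig _ _ It I01_1 e) ltxx.
have [CP|CQ] := connected_sub_closedU cC cP cQ coverC meetC.
- by left; apply: to_ends.
- by right; apply: to_ends.
Qed.

Lemma closed_arc g (p q : pt) : is_arc g p q -> closed (g @` I).
Proof. by case=> cg _; rewrite I01_itv; apply: closed_image_subitv. Qed.

Lemma arc_image_start g (p q : pt) : is_arc g p q -> (g @` I) p.
Proof. by case=> _ [_ [g0 _]]; exists 0; [exact: I01_0|]. Qed.

Lemma arc_image_end g (p q : pt) : is_arc g p q -> (g @` I) q.
Proof. by case=> _ [_ [_ g1]]; exists 1; [exact: I01_1|]. Qed.

End Arcs.

Lemma ivt_le (R : realType) (f : R -> R) (a b v : R) : a <= b ->
  {within `[a, b]%classic, continuous f} -> f a <= v <= f b ->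
  exists2 c, a <= c <= b & f c = v.
Proof.
move=> ab cf /andP[h1 h2].
have hv : Num.min (f a) (f b) <= v <= Num.max (f a) (f b).
  by rewrite (min_idPl (le_trans h1 h2)) (max_idPr (le_trans h1 h2)) h1.
by have [c] := IVT ab cf hv; rewrite in_itv; exists c.
Qed.

Lemma ivt_ge (R : realType) (f : R -> R) (a b v : R) : a <= b ->
  {within `[a, b]%classic, continuous f} -> f b <= v <= f a ->
  exists2 c, a <= c <= b & f c = v.
Proof.
move=> ab cf /andP[h1 h2].
have hv : Num.min (f a) (f b) <= v <= Num.max (f a) (f b).
  by rewrite (min_idPr (le_trans h1 h2)) (max_idPl (le_trans h1 h2)) h1.
by have [c] := IVT ab cf hv; rewrite in_itv; exists c.
Qed.

Section SymmetricSides.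
Variable R : realType.
Notation pt := (R * R)%type.
Notation I := (@I01 R).
Variables (S : set pt) (x y : pt).
Hypothesis xy : x <> y.
Hypothesis cS : closed S.
Hypothesis symS : reflect_line x y @` S = S.
Notation sigma := (reflect_line x y).

Lemma bdry_reflect_line z : bdry S z -> bdry S (sigma z).
Proof.
rewrite /bdry -(closure_id S).1 // => -[Sz nint]; split; first by rewrite -symS; exists z.
move=> int_sz; apply: nint.
have : nbhs z (sigma @^-1` S) := reflect_line_continuous int_sz.
by apply: filterS => w Sw; rewrite -(reflect_lineK xy w) -symS; exists (sigma w).
Qed.

Lemma is_arc_reflect_line g : is_arc g x y -> is_arc (sigma \o g) x y.
Proof.
case=> cg [ig [g0 g1]]; split; last split.
- by apply: within_continuous_comp => // z _; exact: reflect_line_continuous.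
- by move=> s t Is It /= e; apply: ig => //; rewrite -(reflect_lineK xy (g s)) e reflect_lineK.
- by rewrite /= g0 g1 reflect_line_x // reflect_line_y.
Qed.

Lemma reflect_line_arc_fixed g : is_arc g x y ->
  (forall t, I t -> (g @` I) (sigma (g t))) -> forall t, I t -> sigma (g t) = g t.
Proof.
case=> cg [ig [g0 _]]; apply: arc_involution_fixed => //.
- exact: reflect_line_continuous.
- exact: reflect_lineK.
- by rewrite g0 reflect_line_x.
Qed.

Lemma arc_midpoint g : is_arc g x y -> (forall t, I t -> sigma (g t) = g t) ->
  (g @` I) (midpoint x y).
Proof.
case=> cg [_ [g0 g1]] fixg.
have cb : {within `[0, 1]%classic, continuous (base_coord x y \o g)}.
  apply: within_continuous_comp; first by move=> z _; exact: base_coord_continuous.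
  by rewrite -I01_itv.
have D0 := sqdist_ge0 y x.
have mid : (base_coord x y \o g) 0 <= sqdist y x / 2 <= (base_coord x y \o g) 1.
  rewrite /=; have -> : base_coord x y (g 0) = 0 by rewrite g0 /base_coord !subrr !mul0r addr0.
  have -> : base_coord x y (g 1) = sqdist y x by rewrite g1 /base_coord /sqdist !expr2.
  by apply/andP; split; lra.
have [c c01 gc] := ivt_le ler01 cb mid.
by exists c => //; apply: reflect_line_fixed_midpoint => //; exact: fixg.
Qed.

(* The reflected side stays in the boundary, which is split by the two sides;
   being connected it lies in one of them, and if it is its own side the
   reflection fixes that side pointwise. *)
Lemma reflect_side_or_fixed g h : is_arc g x y -> is_arc h x y ->
  bdry S = g @` I `|` h @` I -> g @` I `&` h @` I = [set x; y] ->
  (forall t, I t -> (h @` I) (sigma (g t))) \/ (forall t, I t -> sigma (g t) = g t).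
Proof.
move=> ag ah hb hi; have [sgc [sgi [sg0 sg1]]] := is_arc_reflect_line ag.
have cover t : I t -> (g @` I) ((sigma \o g) t) \/ (h @` I) ((sigma \o g) t).
  move=> It; have : bdry S (sigma (g t)) by apply/bdry_reflect_line; rewrite hb; left; exists t.
  by rewrite hb.
have meet z : (g @` I) z -> (h @` I) z -> z = (sigma \o g) 0 \/ z = (sigma \o g) 1.
  by move=> gz hz; rewrite sg0 sg1; change ([set x; y] z); rewrite -hi.
have := arc_sub_closedU sgc sgi (closed_arc ag) (closed_arc ah) cover meet.
rewrite sg0 sg1 => /(_ (arc_image_start ag) (arc_image_end ag)).
move=> /(_ (arc_image_start ah) (arc_image_end ah)) [to_g|to_h]; last by left.
by right; apply: reflect_line_arc_fixed.
Qed.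

(* Were [g2] fixed, [g1] would be fixed too (and both sides would contain the
   midpoint) or mapped into [g2] (and [g1 (1/2)] would lie on both sides). *)
Lemma reflect_line_side g1 g2 : is_arc g1 x y -> is_arc g2 x y ->
  bdry S = g1 @` I `|` g2 @` I -> g1 @` I `&` g2 @` I = [set x; y] ->
  forall t, I t -> (g1 @` I) (sigma (g2 t)).
Proof.
move=> a1 a2 hb hi.
have meet z : (g1 @` I) z -> (g2 @` I) z -> z = x \/ z = y.
  by move=> g1z g2z; change ([set x; y] z); rewrite -hi.
have [//|fix2] := reflect_side_or_fixed a2 a1 (etrans hb (setUC _ _)) (etrans (setIC _ _) hi).
exfalso; have [to2|fix1] := reflect_side_or_fixed a1 a2 hb hi.
- have [_ [ig1 [g10 g11]]] := a1.
  have I_half : I (1 / 2) by rewrite /I01 /=; apply/andP; split; lra.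
  have [t It e] := to2 _ I_half.
  have on2 : (g2 @` I) (g1 (1 / 2)).
    by exists t => //; rewrite -fix2 // e reflect_lineK.
  have [e'|e'] := meet _ (ex_intro2 _ _ _ I_half erefl) on2.
  + by have := ig1 _ _ I_half I01_0 (etrans e' (esym g10)); lra.
  + by have := ig1 _ _ I_half I01_1 (etrans e' (esym g11)); lra.
- have [e|e] := meet _ (arc_midpoint a1 fix1) (arc_midpoint a2 fix2).
  + exact: midpoint_neql xy e.
  + exact: midpoint_neqr xy e.
Qed.

End SymmetricSides.

Section BoundaryCrossing.
Variable R : realType.
Notation pt := (R * R)%type.
Variable S : set pt.
Hypothesis cS : closed S.

Lemma path_exit_bdry (r : R -> pt) a b : continuous r -> a <= b ->
  S (r a) -> ~ S (r b) -> exists t, a <= t < b /\ bdry S (r t).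
Proof.
move=> cr ab Sa nSb; apply: contrapT => nbd.
have bdry_lt t : a <= t <= b -> S (r t) -> ~ interior S (r t) -> False.
  move=> /andP[h1 h2] St nint; apply: nbd; exists t; split.
    by rewrite h1 lt_neqAle h2 andbT; apply/eqP => tb; apply: nSb; rewrite -tb.
  by split => //; rewrite -(closure_id S).1.
have cover : `[a, b]%classic `<=` r @^-1` S `|` r @^-1` (~` interior S).
  by move=> t _; have [St|nSt] := pselect (S (r t)); [left|right => /interior_subset].
have meet t : `[a, b]%classic t -> S (r t) -> ~ interior S (r t) -> False.
  by move=> /itvccP; exact: bdry_lt.
have [inS|notint] := connected_sub_closedU (@segment_connected _ a b)
  ((continuous_closedP _).1 cr _ cS)
  ((continuous_closedP _).1 cr _ (open_closedC (@open_interior _ S))) cover meet.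
- by apply: nSb; apply: inS; apply/itvccP; rewrite ab lexx.
- by apply: (bdry_lt a); [rewrite lexx ab | | apply: notint; apply/itvccP; rewrite lexx ab].
Qed.

Lemma path_enter_bdry (r : R -> pt) a b : continuous r -> a <= b ->
  ~ S (r a) -> S (r b) -> exists t, a < t <= b /\ bdry S (r t).
Proof.
move=> cr ab nSa Sb.
have cr' : continuous (r \o -%R).
  by move=> t; apply: continuous_comp; [exact: oppr_continuous | exact: cr].
have [|||t [/andP[h1 h2] bt]] := @path_exit_bdry (r \o -%R) (- b) (- a) cr'.
- by rewrite lerN2.
- by rewrite /= opprK.
- by rewrite /= opprK.
by exists (- t); split => //; rewrite ltrNr lerNl h2.
Qed.

End BoundaryCrossing.

Definition bdry_ordered (R : realType) (S : set (R * R)) (x y : R * R) :=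
  forall u w, bdry S u -> bdry S w ->
    (sqdist u x <= sqdist w x /\ sqdist w y <= sqdist u y) \/
    (sqdist w x <= sqdist u x /\ sqdist u y <= sqdist w y).

Section Domination.
Variable R : realType.
Notation pt := (R * R)%type.
Variables (S : set pt) (x y : pt).
Hypotheses (xy : x <> y) (cS : closed S) (segS : segment x y `<=` S).

Definition base_dir : pt := (y.1 - x.1, y.2 - x.2).
Definition normal_dir : pt := (x.2 - y.2, y.1 - x.1).

Definition cross_coord (p : pt) : R :=
  (p.1 - x.1) * normal_dir.1 + (p.2 - x.2) * normal_dir.2.

Lemma sqdist_normal_line p a t :
  sqdist (line_through p (a * normal_dir.1, a * normal_dir.2) t) x =
    sqdist p x + 2 * t * a * cross_coord p + (t * a) ^+ 2 * sqdist y x /\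
  sqdist (line_through p (a * normal_dir.1, a * normal_dir.2) t) y =
    sqdist p y + 2 * t * a * cross_coord p + (t * a) ^+ 2 * sqdist y x.
Proof. by rewrite /sqdist /line_through /cross_coord /=; split; ring. Qed.

Lemma sqdist_base_line m :
  sqdist (line_through x base_dir m) x = m ^+ 2 * sqdist y x /\
  sqdist (line_through x base_dir m) y = (m - 1) ^+ 2 * sqdist y x.
Proof. by rewrite /sqdist /line_through /=; split; ring. Qed.

Lemma normal_line_foot q :
  line_through q (- cross_coord q * normal_dir.1, - cross_coord q * normal_dir.2)
    (1 / sqdist y x) = line_through x base_dir (base_coord x y q / sqdist y x).
Proof.
have := sqdist_base_neq0 xy.
by rewrite /line_through /cross_coord /base_coord /sqdist /= => D0; congr pair; field.
Qed.

Lemma base_line_in_S m : 0 <= m <= 1 -> S (line_through x base_dir m).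
Proof. by move=> m01; apply: segS; exists m. Qed.

Lemma base_line0 : line_through x base_dir 0 = x.
Proof. by rewrite /line_through !mul0r !addr0; case: (x). Qed.

Lemma exists_bdry_ge (B : R) : (forall z, S z -> sqdist z x <= B) ->
  forall p, S p -> exists w, bdry S w /\ sqdist p x <= sqdist w x /\ sqdist p y <= sqdist w y.
Proof.
move=> bndS p Sp; have D0 := sqdist_base_gt0 xy.
have B0 : 0 <= B.
  by rewrite -(sqdistxx x) bndS // -base_line0; apply: base_line_in_S; rewrite lexx ler01.
(* go along the normal, on the side where both distances increase *)
pose a : R := if 0 <= cross_coord p then 1 else -1.
have a2 : a ^+ 2 = 1 by rewrite /a; case: ifP; rewrite ?sqrrN expr1n.
have ak : 0 <= a * cross_coord p.
  by rewrite /a; case: ifP => [|/negbT]; rewrite ?mul1r // -ltNge mulN1r oppr_ge0 => /ltW.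
pose r := line_through p (a * normal_dir.1, a * normal_dir.2).
have grow t : 0 <= t -> sqdist p x + t ^+ 2 * sqdist y x <= sqdist (r t) x /\
                        sqdist p y <= sqdist (r t) y.
  move=> t0; have [-> ->] := sqdist_normal_line p a t; rewrite exprMn a2 mulr1.
  have : 0 <= t * (a * cross_coord p) by rewrite mulr_ge0.
  have : 0 <= t ^+ 2 * sqdist y x by rewrite mulr_ge0 ?sqr_ge0 ?ltW.
  by split; nra.
(* chosen so that [B < T ^+ 2 * sqdist y x]: the point [r T] is outside [S] *)
pose T := (B + 1) / sqdist y x + 1.
have T1 : 1 <= T by rewrite lerDr divr_ge0 // ?ltW //; lra.
have TD : T * sqdist y x = B + 1 + sqdist y x by rewrite /T mulrDl mul1r mulfVK // gt_eqF.
have nST : ~ S (r T).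
  move=> /bndS; have [gx _] := grow T (le_trans ler01 T1).
  have : 0 <= (T - 1) * (T * sqdist y x) by rewrite mulr_ge0 ?subr_ge0 // TD; lra.
  by have := sqdist_ge0 p x; nra.
have S0 : S (r 0) by rewrite /r /line_through !mul0r !addr0; case: (p) Sp.
have [t [/andP[t0 _] bt]] :=
  path_exit_bdry cS (@line_through_continuous _ _ _) (le_trans ler01 T1) S0 nST.
exists (r t); split => //; have [gx gy] := grow t t0; split => //.
have : 0 <= t ^+ 2 * sqdist y x by rewrite mulr_ge0 ?sqr_ge0 ?ltW.
lra.
Qed.

Lemma exists_bdry_lt_base_line m : ~ S (line_through x base_dir m) ->
  exists w, bdry S w /\ sqdist w x < m ^+ 2 * sqdist y x /\
                        sqdist w y < (m - 1) ^+ 2 * sqdist y x.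
Proof.
move=> nSm; have D0 := sqdist_base_gt0 xy.
have [m0|m0] := ltP m 0.
  have S0 : S (line_through x base_dir 0) by apply: base_line_in_S; rewrite lexx ler01.
  have [n [/andP[mn n0] bn]] :=
    path_enter_bdry cS (@line_through_continuous _ _ _) (ltW m0) nSm S0.
  exists (line_through x base_dir n); split => //; have [-> ->] := sqdist_base_line n.
  by split; rewrite ltr_pM2r //; nra.
have [m1|m1] := leP m 1.
  by exfalso; apply: nSm; apply: base_line_in_S; rewrite m0 m1.
have S1 : S (line_through x base_dir 1) by apply: base_line_in_S; rewrite ler01 lexx.
have [n [/andP[n1 nm] bn]] :=
  path_exit_bdry cS (@line_through_continuous _ _ _) (ltW m1) S1 nSm.
exists (line_through x base_dir n); split => //; have [-> ->] := sqdist_base_line n.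
by split; rewrite ltr_pM2r //; nra.
Qed.

(* Walk from [q] along the normal to its foot on the base line, then along the
   base line towards the base, which lies in [S]; both distances decrease. *)
Lemma exists_bdry_lt q : ~ S q ->
  exists w, bdry S w /\ sqdist w x < sqdist q x /\ sqdist w y < sqdist q y.
Proof.
move=> nSq; have D0 := sqdist_base_gt0 xy.
pose k := cross_coord q.
pose r := line_through q (- k * normal_dir.1, - k * normal_dir.2).
have dist t : sqdist (r t) x = sqdist q x - t * k ^+ 2 * (2 - t * sqdist y x) /\
              sqdist (r t) y = sqdist q y - t * k ^+ 2 * (2 - t * sqdist y x).
  by have [-> ->] := sqdist_normal_line q (- k) t; split; rewrite /k; ring.
have iD : 0 < 1 / sqdist y x by rewrite divr_gt0.
have [Sfoot|nSfoot] := pselect (S (r (1 / sqdist y x))).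
  have nS0 : ~ S (r 0) by rewrite /r /line_through !mul0r !addr0; case: (q) nSq.
  have [t [/andP[t0 tD] bt]] :=
    path_enter_bdry cS (@line_through_continuous _ _ _) (ltW iD) nS0 Sfoot.
  have k0 : 0 < k ^+ 2.
    rewrite lt_neqAle sqr_ge0 andbT eq_sym sqrf_eq0; apply/eqP => k0; apply: nSq.
    by move: Sfoot; rewrite /r k0 /line_through /= oppr0 !mul0r !mulr0 !addr0; case: (q).
  have tD1 : t * sqdist y x <= 1 by move: tD; rewrite ler_pdivlMr // mul1r.
  have : 0 < t * k ^+ 2 * (2 - t * sqdist y x) by apply: mulr_gt0; [exact: mulr_gt0 | lra].
  by exists (r t); split => //; have [-> ->] := dist t; split; lra.
have foot : r (1 / sqdist y x) = line_through x base_dir (base_coord x y q / sqdist y x).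
  exact: normal_line_foot.
have nSl : ~ S (line_through x base_dir (base_coord x y q / sqdist y x)) by rewrite -foot.
have [w [bw [wx wy]]] := exists_bdry_lt_base_line nSl.
have [fx fy] := sqdist_base_line (base_coord x y q / sqdist y x); rewrite -foot in fx fy.
have [dx dy] := dist (1 / sqdist y x).
have e1 : 2 - 1 / sqdist y x * sqdist y x = 1 by rewrite mul1r mulVf ?gt_eqF //; lra.
have : 0 <= 1 / sqdist y x * k ^+ 2 by rewrite mulr_ge0 ?sqr_ge0 ?ltW.
by rewrite e1 mulr1 in dx dy; exists w; split => //; split; lra.
Qed.

(* A point of [S] and a point outside it reach the boundary at points strictly
   ordered in both distances, which [bdry_ordered] forbids. *)
Lemma bdry_ordered_dominated (B : R) : (forall z, S z -> sqdist z x <= B) ->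
  bdry_ordered S x y -> forall p q, S p ->
  sqdist q x <= sqdist p x -> sqdist q y <= sqdist p y -> S q.
Proof.
move=> bndS ordS p q Sp qx qy; apply: contrapT => nSq.
have [w [bw [wx wy]]] := exists_bdry_ge bndS Sp.
have [v [bv [vx vy]]] := exists_bdry_lt nSq.
by case: (ordS _ _ bw bv) => -[h1 h2]; lra.
Qed.

Lemma bdry_ordered_union (B : R) : (forall z, S z -> sqdist z x <= B) ->
  bdry_ordered S x y ->
  S = \bigcup_(rs in [set (Defs.edist p x, Defs.edist p y) | p in S])
        (cdisk x rs.1 `&` cdisk y rs.2).
Proof.
move=> bndS ordS; apply/seteqP; split => [p Sp|q [_ [p Sp <-] [/= qx qy]]].
  by exists (Defs.edist p x, Defs.edist p y); [exists p | split; rewrite /cdisk /=].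
by move: qx qy; rewrite /cdisk /= !le_edist; exact: (bdry_ordered_dominated bndS ordS Sp).
Qed.

End Domination.

Section SlenderOfOrdered.
Variable R : realType.
Notation pt := (R * R)%type.
Notation I := (@I01 R).
Variables (S : set pt) (x y : pt).
Hypotheses (xy : x <> y) (ordS : bdry_ordered S x y).

Definition sqdist_diff (z : pt) : R := sqdist z x - sqdist z y.

Lemma sqdist_diff_continuous : continuous sqdist_diff.
Proof. by move=> z; apply: cvgB; exact: sqdist_continuous. Qed.

Lemma bdry_ordered_le u w : bdry S u -> bdry S w -> sqdist_diff u <= sqdist_diff w ->
  sqdist u x <= sqdist w x /\ sqdist w y <= sqdist u y.
Proof. by rewrite /sqdist_diff => bu bw; case: (ordS bu bw) => -[h1 h2] uw; split; lra. Qed.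

Lemma bdry_ordered_eq u w : bdry S u -> bdry S w -> sqdist_diff u = sqdist_diff w ->
  sqdist u x = sqdist w x /\ sqdist u y = sqdist w y.
Proof.
move=> bu bw uw.
have [h1 h2] : sqdist u x <= sqdist w x /\ sqdist w y <= sqdist u y.
  by apply: bdry_ordered_le; rewrite ?uw.
have [h3 h4] : sqdist w x <= sqdist u x /\ sqdist u y <= sqdist w y.
  by apply: bdry_ordered_le; rewrite ?uw.
by split; lra.
Qed.

Lemma bdry_ordered_diff_bounds z : bdry S x -> bdry S y -> bdry S z ->
  sqdist_diff x <= sqdist_diff z <= sqdist_diff y.
Proof.
move=> bx by_ bz; apply/andP; split.
  case: (ordS bz bx); rewrite /sqdist_diff !sqdistxx => -[h1 h2]; last by lra.
  suff -> : z = x by rewrite sqdistxx.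
  by apply: sqdist_eq0; apply/eqP; rewrite eq_le h1 sqdist_ge0.
case: (ordS bz by_); rewrite /sqdist_diff !sqdistxx => -[h1 h2]; first by lra.
suff -> : z = y by rewrite sqdistxx.
by apply: sqdist_eq0; apply/eqP; rewrite eq_le h2 sqdist_ge0.
Qed.

(* A decrease of [sqdist_diff] along the arc would, by the IVT on [[0, s]],
   [[s, t]] and [[t, 1]], give three boundary points with the same value of
   [sqdist_diff], hence the same distances to [x] and [y]. *)
Lemma bdry_ordered_arc_mono g : is_arc g x y -> g @` I `<=` bdry S ->
  forall s t, I s -> I t -> s <= t -> sqdist_diff (g s) <= sqdist_diff (g t).
Proof.
move=> [cg [ig [g0 g1]]] sub.
have bd r : I r -> bdry S (g r) by move=> Ir; apply: sub; exists r.
have bx : bdry S x by rewrite -g0; exact: bd I01_0.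
have by_ : bdry S y by rewrite -g1; exact: bd I01_1.
have cf a b : 0 <= a -> b <= 1 -> {within `[a, b]%classic, continuous (sqdist_diff \o g)}.
  move=> a0 b1; apply: within_continuous_comp; last exact: continuous_within_subitv.
  by move=> z _; exact: sqdist_diff_continuous.
move=> s t Is It st; rewrite leNgt; apply/negP => lt_ts.
have /andP[s0 s1] := Is; have /andP[t0 t1] := It.
pose v := (sqdist_diff (g s) + sqdist_diff (g t)) / 2.
have [v_gt v_lt] : sqdist_diff (g t) < v /\ v < sqdist_diff (g s) by rewrite /v; split; lra.
have /andP[lo_t _] := bdry_ordered_diff_bounds bx by_ (bd _ It).
have /andP[_ hi_s] := bdry_ordered_diff_bounds bx by_ (bd _ Is).
have [r1 /andP[r10 r1s] f1] : exists2 r, 0 <= r <= s & sqdist_diff (g r) = v.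
  by apply: ivt_le s0 (cf 0 s (lexx 0) s1) _; rewrite /= g0 (le_trans lo_t (ltW v_gt)) ltW.
have [r2 /andP[r2s r2t] f2] : exists2 r, s <= r <= t & sqdist_diff (g r) = v.
  by apply: ivt_ge st (cf s t s0 t1) _; rewrite /= !ltW.
have [r3 /andP[r3t r31] f3] : exists2 r, t <= r <= 1 & sqdist_diff (g r) = v.
  by apply: ivt_le t1 (cf t 1 t0 (lexx 1)) _; rewrite /= g1 ltW // (le_trans (ltW v_lt) hi_s).
have Ir1 : I r1 by apply: (I01_between I01_0 Is); rewrite r10 r1s.
have Ir2 : I r2 by apply: (I01_between Is It); rewrite r2s r2t.
have Ir3 : I r3 by apply: (I01_between It I01_1); rewrite r3t r31.
have r1_lt : r1 < s by rewrite lt_neqAle r1s andbT; apply/eqP => e; move: f1; rewrite e; lra.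
have r2_lt : r2 < t by rewrite lt_neqAle r2t andbT; apply/eqP => e; move: f2; rewrite e; lra.
have s_lt : s < r2 by rewrite lt_neqAle r2s andbT; apply/eqP => e; move: f2; rewrite -e; lra.
have t_lt : t < r3 by rewrite lt_neqAle r3t andbT; apply/eqP => e; move: f3; rewrite -e; lra.
have neq a b : I a -> I b -> a < b -> g b <> g a.
  by move=> Ia Ib ab /(ig _ _ Ib Ia) ba; move: ab; rewrite ba ltxx.
have [e1 e2] := bdry_ordered_eq (bd _ Ir2) (bd _ Ir1) (etrans f2 (esym f1)).
have [e3 e4] := bdry_ordered_eq (bd _ Ir3) (bd _ Ir1) (etrans f3 (esym f1)).
apply: (neq r2 r3 Ir2 Ir3); first by lra.
apply/esym/(sqdist2_at_most_two xy e1 e2 e3 e4); apply: neq => //; lra.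
Qed.

Lemma bdry_ordered_slender : slender S x y.
Proof.
move=> g ag sub s t s0 st t1; rewrite !le_edist.
have Is : I s by rewrite /I01 /= s0 (le_trans st t1).
have It : I t by rewrite /I01 /= t1 (le_trans s0 st).
apply: bdry_ordered_le; [exact: sub | exact: sub | exact: bdry_ordered_arc_mono].
Qed.

End SlenderOfOrdered.

(* Near a boundary point no point of [S] is strictly closer to both [x] and [y]:
   the set of such points is an open neighbourhood inside [S]. *)
Lemma union_bdry_ordered (R : realType) (S : set (R * R)) (x y : R * R) F :
  closed S -> S = \bigcup_(rs in F) (cdisk x rs.1 `&` cdisk y rs.2) ->
  bdry_ordered S x y.
Proof.
move=> cS SF.
have bdry_S z : bdry S z -> S z by rewrite /bdry -(closure_id S).1 // => -[].
have no_lt p c : bdry S p -> S c -> sqdist p x < sqdist c x -> sqdist p y < sqdist c y -> False.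
  move=> [_ nint] Sc px py; apply: nint.
  pose O := [set z | sqdist z x < sqdist c x] `&` [set z | sqdist z y < sqdist c y].
  have oO : open O.
    apply: openI.
      exact: (continuousP _).1 (@sqdist_continuous R x) _ (@open_lt R _).
    exact: (continuousP _).1 (@sqdist_continuous R y) _ (@open_lt R _).
  have OS : O `<=` S.
    move=> z [/= zx zy]; move: Sc; rewrite SF => -[rs Frs [/= cx cy]].
    by exists rs => //; split; rewrite /cdisk /=;
      [apply: le_trans cx | apply: le_trans cy]; rewrite le_edist ltW.
  by apply: filterS OS _; apply: open_nbhs_nbhs.
move=> u w bu bw.
case: (ltgtP (sqdist u x) (sqdist w x)) => hx; case: (ltgtP (sqdist u y) (sqdist w y)) => hy.
all: first [ by exfalso; exact: no_lt bu (bdry_S _ bw) _ _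
           | by exfalso; exact: no_lt bw (bdry_S _ bu) _ _
           | by left; split; rewrite ?hx ?hy ?ltW | by right; split; rewrite ?hx ?hy ?ltW ].
Qed.

Section SlenderSymmetric.
Variable R : realType.
Notation I := (@I01 R).

Lemma slender_bdry_ordered (S : set (R * R)) (x y : R * R) (g1 g2 : R -> R * R) :
  x <> y -> closed S -> reflect_line x y @` S = S ->
  is_arc g1 x y -> is_arc g2 x y ->
  bdry S = g1 @` I `|` g2 @` I -> g1 @` I `&` g2 @` I = [set x; y] ->
  slender S x y -> bdry_ordered S x y.
Proof.
move=> xy cS symS a1 a2 hb hi sl.
have twin z : bdry S z ->
    exists2 s, I s & sqdist (g1 s) x = sqdist z x /\ sqdist (g1 s) y = sqdist z y.
  rewrite hb => -[[s Is <-]|[t It <-]]; first by exists s.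
  have [s Is e] := reflect_line_side xy cS symS a1 a2 hb hi It.
  by exists s => //; rewrite e sqdist_reflect_line_x // sqdist_reflect_line_y.
have side1 : g1 @` I `<=` bdry S by rewrite hb => z h; left.
move=> u w /twin [s /andP[s0 s1] [<- <-]] /twin [t /andP[t0 t1] [<- <-]].
have [st|ts] := leP s t.
  by left; have := sl g1 a1 side1 s t s0 st t1; rewrite !le_edist.
by right; have := sl g1 a1 side1 t s t0 (ltW ts) s1; rewrite !le_edist.
Qed.

End SlenderSymmetric.

Lemma sqrB_le (R : realFieldType) (a b K : R) : `|a| <= K -> (a - b) ^+ 2 <= (K + `|b|) ^+ 2.
Proof.
rewrite ler_norml => /andP[a_ge a_le].
have /andP[b_ge b_le] : - `|b| <= b <= `|b| by rewrite -ler_norml.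
nra.
Qed.

Lemma compact_sqdist_bounded (R : realType) (S : set (R * R)) (c : R * R) :
  compact S -> exists B, forall z, S z -> sqdist z c <= B.
Proof.
move=> /compact_bounded [M [_ HM]].
exists ((M + 1 + `|c.1|) ^+ 2 + (M + 1 + `|c.2|) ^+ 2) => z Sz.
have : `|z| <= M + 1 by apply: HM => //; rewrite ltrDl.
rewrite [`|z|]/(Num.max `|z.1| `|z.2|) ge_max => /andP[z1 z2].
by apply: lerD; apply: sqrB_le.
Qed.

Theorem mainTheorem3 (R : realType) (S : set (R * R)%type) (x y : (R * R)%type) :
  symmetric_adornment S x y ->
  (slender S x y <->
   exists F : set (R * R)%type,
     S = \bigcup_(rs in F) (cdisk x rs.1 `&` cdisk y rs.2)).
Proof.
case=> -[[cpt _] xy _ segS [g1 [g2 [a1 a2 hb hi]]]] symS.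
have cS := compact_closed_pt cpt.
split => [sl | [F SF]].
- have [B bndS] := compact_sqdist_bounded x cpt.
  eexists; apply: (bdry_ordered_union xy cS segS bndS).
  exact: (slender_bdry_ordered xy cS symS a1 a2 hb hi sl).
- apply: bdry_ordered_slender xy _.
  exact: union_bdry_ordered cS SF.
Qed.
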